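(* Let $\mathcal{X}\subset\mathbb{R}^n$ be closed and convex, $\Xi\subset\mathbb{R}^m$ closed and convex, $\beta\in(0,1)$, $\varphi:\mathcal{X}\times\mathcal{X}\times\Xi\to\mathbb{R}$ bounded and continuous, and $\mathcal{Y}:\mathcal{X}\times\Xi\rightrightarrows\mathcal{X}$ nonempty-valued, compact-valued and continuous. Let $\xi_1,\ldots,\xi_N\in\Xi$ and $\mu_N=\frac1N\sum_{i=1}^N\xi_i$. Let $\mathcal{P}$ be a set of probability distributions on $\Xi$ such that $\mathbb{E}_Q[\boldsymbol{\xi}]=\mu_N$ for every $Q\in\mathcal{P}$ and the point mass $\delta_{\mu_N}\in\mathcal{P}$. If the MPC Bellman operator $B_{\mathrm{M}}$ is concavity preserving, then the DRO functional equation $$v_{\mathrm{R}}(x,\xi)=\inf_{y\in\mathcal{Y}(x,\xi)}\Bigl\{\varphi(x,y,\xi)+\beta\sup_{Q\in\mathcal{P}}\mathbb{E}_Q[v_{\mathrm{R}}(y,\boldsymbol{\xi})]\Bigr\}\quad\forall(x,\xi)\in\mathcal{X}\times\Xi$$ has a solution which is the same as the (unique bounded continuous) solution $v_{\mathrm{M}}$ of the MPC functional equation $$v_{\mathrm{M}}(x,\xi)=\inf_{y\in\mathcal{Y}(x,\xi)}\bigl\{\varphi(x,y,\xi)+\beta v_{\mathrm{M}}(y,\mu_N)\bigr\}\quad\forall(x,\xi)\in\mathcal{X}\times\Xi.$$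
   Context: $C_b(\mathcal{X}\times\Xi)$ denotes the Banach space of bounded continuous real-valued functions on $\mathcal{X}\times\Xi$ with the sup norm. The MPC Bellman operator $B_{\mathrm{M}}:C_b(\mathcal{X}\times\Xi)\to C_b(\mathcal{X}\times\Xi)$ is $B_{\mathrm{M}}(f)(x,\xi)=\inf_{y\in\mathcal{Y}(x,\xi)}\{\varphi(x,y,\xi)+\beta f(y,\mu_N)\}$. $B_{\mathrm{M}}$ is called concavity preserving if there exists a closed subset $\mathcal{F}\subset C_b(\mathcal{X}\times\Xi)$ such that $\xi\mapsto f(x,\xi)$ is concave for every $x\in\mathcal{X}$ and $f\in\mathcal{F}$, and $B_{\mathrm{M}}(\mathcal{F})\subset\mathcal{F}$. *)

From HB Require Import structures.
From mathcomp Require Import all_boot all_order all_algebra.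
From mathcomp Require Import all_classical all_reals all_analysis.
Set Implicit Arguments. Unset Strict Implicit. Unset Printing Implicit Defensive.
Import Order.TTheory GRing.Theory Num.Theory.
Import numFieldNormedType.Exports.
Local Open Scope classical_set_scope.
Local Open Scope ring_scope.

Notation vec R n := 'rV[R]_n.

Definition borelRV (R : realType) (m : nat) :=
  g_sigma_algebraType (@open 'rV[R]_m).

(* Functions on X x Xi are represented curried and total; only their values on
   X x Xi matter.  C_b(X x Xi): bounded and continuous on X x Xi. *)
Definition Cb (R : realType) (n m : nat) (X : set (vec R n)) (Xi : set (vec R m))
    (f : vec R n -> vec R m -> R) : Prop :=
  (exists M : R, forall x xi, X x -> Xi xi -> `|f x xi| <= M) /\
  {within X `*` Xi, continuous (fun p : vec R n * vec R m => f p.1 p.2)}.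

Definition concave_on (R : realType) (m : nat) (D : set (vec R m))
    (g : vec R m -> R) : Prop :=
  convex_function (D : set (convex_lmodType (vec R m))) (fun z => - g z).

Definition uhc_on (T U : topologicalType) (D : set T) (G : T -> set U) : Prop :=
  forall p, D p -> forall V : set U, open V -> G p `<=` V ->
    exists2 W, nbhs p W & forall q, W q -> D q -> G q `<=` V.

Definition lhc_on (T U : topologicalType) (D : set T) (G : T -> set U) : Prop :=
  forall p, D p -> forall V : set U, open V -> G p `&` V !=set0 ->
    exists2 W, nbhs p W & forall q, W q -> D q -> G q `&` V !=set0.

Definition continuous_corr (T U : topologicalType) (D : set T) (G : T -> set U) :=
  uhc_on D G /\ lhc_on D G.

Definition emp_mean (R : realType) (m N : nat) (xis : 'I_N -> vec R m) : vec R m :=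
  N%:R^-1 *: \sum_(i < N) xis i.

Definition BM (R : realType) (n m : nat) (Y : vec R n -> vec R m -> set (vec R n))
    (phi : vec R n -> vec R n -> vec R m -> R) (beta : R) (mu : vec R m)
    (f : vec R n -> vec R m -> R) : vec R n -> vec R m -> R :=
  fun x xi => inf [set phi x y xi + beta * f y mu | y in Y x xi].

(* Closedness is w.r.t. the sup norm on X x Xi (uniform limits). *)
Definition concavity_preserving (R : realType) (n m : nat)
    (X : set (vec R n)) (Xi : set (vec R m))
    (B : (vec R n -> vec R m -> R) -> vec R n -> vec R m -> R) : Prop :=
  exists F : set (vec R n -> vec R m -> R),
    [/\ F !=set0,
        F `<=` Cb X Xi,
        (forall (u : nat -> vec R n -> vec R m -> R) f,
            (forall k, F (u k)) -> Cb X Xi f ->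
            (forall e : R, 0 < e -> exists K, forall k, (K <= k)%N ->
               forall x xi, X x -> Xi xi -> `|u k x xi - f x xi| <= e) ->
            F f),
        (forall f, F f -> forall x, X x -> concave_on Xi (f x)) &
        (forall f, F f -> F (B f))].

Definition MPC_eq (R : realType) (n m : nat) (X : set (vec R n)) (Xi : set (vec R m))
    (Y : vec R n -> vec R m -> set (vec R n))
    (phi : vec R n -> vec R n -> vec R m -> R) (beta : R) (mu : vec R m)
    (v : vec R n -> vec R m -> R) : Prop :=
  forall x xi, X x -> Xi xi -> v x xi = BM Y phi beta mu v x xi.

Definition DRO_eq (R : realType) (n m : nat) (X : set (vec R n)) (Xi : set (vec R m))
    (Y : vec R n -> vec R m -> set (vec R n))
    (phi : vec R n -> vec R n -> vec R m -> R) (beta : R)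
    (P : set (probability (borelRV R m) R))
    (v : vec R n -> vec R m -> R) : Prop :=
  forall x xi, X x -> Xi xi ->
    ((v x xi)%:E =
     ereal_inf [set ((phi x y xi)%:E + beta%:E *
                      ereal_sup [set (\int[Q]_(z in (Xi : set (borelRV R m))) (v y z)%:E)%E
                                | Q in P])%E
               | y in Y x xi])%E.

From HB Require Import structures.
From mathcomp Require Import all_boot all_order all_algebra.
From mathcomp Require Import all_classical all_reals all_analysis.
From mathcomp Require Import ring lra.
Import Order.TTheory GRing.Theory Num.Theory.
Import numFieldNormedType.Exports.
Local Open Scope classical_set_scope.
Local Open Scope ring_scope.

(* B_M is a beta-contraction for the uniform distance on X x Xi,
   so its iterates from any f0 in the invariant family F converge uniformly to
   the unique bounded fixed point v_M, which lies in F because F is closed; hence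
   xi |-> v_M(y, xi) is concave, continuous and bounded on Xi.  Jensen's
   inequality then gives E_Q[v_M(y, xi)] <= v_M(y, mu_N) for every Q in P, with
   equality at the point mass at mu_N, so the supremum over P in the DRO equation
   is v_M(y, mu_N) and v_M solves it.  Jensen's inequality is obtained from
   affine majorants of a concave function: projecting (mu, g mu + e) onto the
   closed convex hypograph of g yields a supporting hyperplane whose affine
   function dominates g on Xi and exceeds g mu by at most e at mu. *)

Section real_lemmas.
Context {R : realType}.

Lemma eq_of_dist_le (a b : R) : (forall d, 0 < d -> `|a - b| <= d) -> a = b.
Proof.
move=> h; apply/eqP; rewrite -subr_eq0 -normr_le0; apply/ler_addgt0Pr => d d0.
by rewrite add0r; apply: h.
Qed.

Lemma geometric_eventually_le {b c t : R} : 0 <= b -> b < 1 -> 0 <= c -> 0 < t ->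
  exists K, forall k, (K <= k)%N -> b ^+ k * c <= t.
Proof.
move=> b0 b1 c0 t0; have c1 : 0 < c + 1 by rewrite ltr_pwDr.
have b1' : `|b| < 1 by rewrite ger0_norm.
have /cvgrPdist_le/(_ (t / (c + 1))) := cvg_expr b1'.
case=> [|K _ hK]; first by rewrite divr_gt0.
exists K => k /hK; rewrite /= sub0r normrN ger0_norm ?exprn_ge0 // => bk.
rewrite (le_trans (ler_wpM2r c0 bk)) // -mulrA ler_piMr ?ltW //.
by rewrite mulrC ltr_pdivrMr // mul1r ltrDl.
Qed.

Lemma ge0_of_ge0_perturbation (a b : R) : 0 <= b ->
  (forall l, 0 < l -> l <= 1 -> 0 <= a + l * b) -> 0 <= a.
Proof.
move=> b0 h; rewrite leNgt; apply/negP => a0.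
have ba : 0 < b - a by lra.
pose l := - a / (b - a).
have lba : l * (b - a) = - a by rewrite mulfVK ?gt_eqF.
have l0 : 0 < l by rewrite divr_gt0 ?oppr_gt0.
have l1 : l <= 1 by rewrite ler_pdivrMr // mul1r; lra.
by have := h l l0 l1; nra.
Qed.

End real_lemmas.

Section sup_distance.
Context {R : realType} {U V : Type}.
Variables (X : set U) (Xi : set V).
Implicit Types (f g h : U -> V -> R) (u : nat -> U -> V -> R).

Definition bounded_on f := exists M : R, forall x xi, X x -> Xi xi -> `|f x xi| <= M.

Definition sup_dist_le f g (c : R) :=
  forall x xi, X x -> Xi xi -> `|f x xi - g x xi| <= c.

Definition cvg_unif u f :=
  forall e : R, 0 < e -> exists K, forall k, (K <= k)%N -> sup_dist_le (u k) f e.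

Lemma sup_dist_leC {f g c} : sup_dist_le f g c -> sup_dist_le g f c.
Proof. by move=> fg x xi Xx Xxi; rewrite distrC; apply: fg. Qed.

Lemma sup_dist_le_trans {f g h a b} :
  sup_dist_le f g a -> sup_dist_le g h b -> sup_dist_le f h (a + b).
Proof.
move=> fg gh x xi Xx Xxi; apply: le_trans (ler_distD (g x xi) _ _) _.
by apply: lerD; [apply: fg | apply: gh].
Qed.

Lemma sup_dist_le_le {f g a b} : a <= b -> sup_dist_le f g a -> sup_dist_le f g b.
Proof. by move=> ab fg x xi Xx Xxi; apply: le_trans ab; apply: fg. Qed.

Lemma bounded_on_sup_dist {f g c} : bounded_on g -> sup_dist_le f g c -> bounded_on f.
Proof.
move=> [M gM] fg; exists (c + M) => x xi Xx Xxi.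
rewrite -[f x xi](subrK (g x xi)); apply: le_trans (ler_normD _ _) _.
by apply: lerD; [apply: fg | apply: gM].
Qed.

Lemma bounded_on_sup_dist_le {f g} :
  bounded_on f -> bounded_on g -> exists2 c, 0 <= c & sup_dist_le f g c.
Proof.
move=> [Mf fM] [Mg gM]; exists (`|Mf| + `|Mg|); first by rewrite addr_ge0.
move=> x xi Xx Xxi; apply: le_trans (ler_normB _ _) _.
by apply: lerD; apply: le_trans (ler_norm _); [apply: fM | apply: gM].
Qed.

(* The limit is [sup_k (u_k - e_k)], which needs no completeness argument. *)
Lemma uniform_cauchy_limit {u} {e : nat -> R} :
  (forall k l, (k <= l)%N -> sup_dist_le (u l) (u k) (e k)) ->
  exists v, forall k, sup_dist_le v (u k) (e k).
Proof.
move=> cauchy; pose v x xi := sup [set u k x xi - e k | k in [set: nat]].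
exists v => k x xi Xx Xxi.
have e_ge0 j : 0 <= e j by apply: le_trans (cauchy j j (leqnn j) x xi Xx Xxi).
have ub j : u j x xi - e j <= u k x xi + e k.
  have [jk|kj] := leqP j k.
    have := cauchy j k jk x xi Xx Xxi; rewrite ler_norml => /andP[h _].
    by have := e_ge0 k; lra.
  have := cauchy k j (ltnW kj) x xi Xx Xxi; rewrite ler_norml => /andP[_ h].
  by have := e_ge0 j; lra.
have lb : u k x xi - e k <= v x xi.
  by apply: ub_le_sup; [exists (u k x xi + e k) => _ [j _ <-] | exists k].
have le : v x xi <= u k x xi + e k.
  by apply: ge_sup; [exists (u 0%N x xi - e 0%N); exists 0%N | move=> _ [j _ <-]].
by rewrite ler_norml; apply/andP; split; lra.
Qed.

Section contraction.
Variables (beta : R) (B : (U -> V -> R) -> U -> V -> R).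
Hypotheses (beta_ge0 : 0 <= beta) (beta_lt1 : beta < 1)
  (B_bounded : forall f, bounded_on f -> bounded_on (B f))
  (B_contraction : forall f g c, bounded_on f -> bounded_on g ->
     sup_dist_le f g c -> sup_dist_le (B f) (B g) (beta * c)).

Definition fixed_on f := forall x xi, X x -> Xi xi -> f x xi = B f x xi.

Lemma fixed_on_sup_dist_le f g c :
  fixed_on f -> fixed_on g -> sup_dist_le (B f) (B g) c -> sup_dist_le f g c.
Proof. by move=> ff fg fgc x xi Xx Xxi; rewrite ff // fg //; apply: fgc. Qed.

Lemma iter_bounded {f0} k : bounded_on f0 -> bounded_on (iter k B f0).
Proof. by move=> bf0; elim: k => [|k IH] //=; apply: B_bounded. Qed.

Lemma iter_sup_dist_le {f0 c} k l : bounded_on f0 -> 0 <= c -> sup_dist_le (B f0) f0 c ->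
  (k <= l)%N -> sup_dist_le (iter l B f0) (iter k B f0) (beta ^+ k * (c / (1 - beta))).
Proof.
move=> bf0 c0 c1 /subnKC <-; pose u j := iter j B f0.
have step j : sup_dist_le (u j.+1) (u j) (beta ^+ j * c).
  elim: j => [|j IH]; first by rewrite mul1r.
  by rewrite exprS -mulrA; apply: B_contraction IH; apply: iter_bounded.
have b1 : 0 < 1 - beta by rewrite subr_gt0.
suff telescope : forall d,
    sup_dist_le (u (k + d)%N) (u k) ((beta ^+ k - beta ^+ (k + d)) * (c / (1 - beta))).
  apply: sup_dist_le_le (telescope _); rewrite ler_wpM2r ?gerBl ?exprn_ge0 //.
  exact: divr_ge0 c0 (ltW b1).
elim=> [|d IH]; first by move=> x xi _ _; rewrite addn0 !subrr normr0 mul0r.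
rewrite addnS; apply: sup_dist_le_le (sup_dist_le_trans (step _) IH).
by rewrite exprS le_eqVlt; apply/orP; left; apply/eqP; field; rewrite gt_eqF.
Qed.

Lemma contraction_fixed_point f0 : bounded_on f0 ->
  exists v, [/\ bounded_on v, cvg_unif (fun k => iter k B f0) v & fixed_on v].
Proof.
move=> bf0; have [c c0 c1] := bounded_on_sup_dist_le (B_bounded _ bf0) bf0.
have C0 : 0 <= c / (1 - beta) by rewrite divr_ge0 // subr_ge0 ltW.
have [v vu] := uniform_cauchy_limit (fun k l => iter_sup_dist_le k l bf0 c0 c1).
have bv : bounded_on v := bounded_on_sup_dist (iter_bounded 0 bf0) (vu 0%N).
exists v; split => //.
  move=> e e0; have [K Ke] := geometric_eventually_le beta_ge0 beta_lt1 C0 e0.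
  by exists K => k /Ke ek; apply: sup_dist_le_le ek (sup_dist_leC (vu k)).
move=> x xi Xx Xxi; apply: eq_of_dist_le => d d0.
have [K Kd] := geometric_eventually_le beta_ge0 beta_lt1 C0 (divr_gt0 d0 (@ltr0n R 2)).
have BuBv := B_contraction _ _ _ (iter_bounded K bf0) bv (sup_dist_leC (vu K)).
have := sup_dist_le_trans (vu K.+1) BuBv x xi Xx Xxi.
rewrite mulrA -exprS; move/le_trans; apply.
by have := Kd K.+1 (leqnSn K); lra.
Qed.

Lemma fixed_on_unique v w : bounded_on v -> bounded_on w -> fixed_on v -> fixed_on w ->
  forall x xi, X x -> Xi xi -> w x xi = v x xi.
Proof.
move=> bv bw fv fw; have [c c0 wv] := bounded_on_sup_dist_le bw bv.
have wvk k : sup_dist_le w v (beta ^+ k * c).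
  elim: k => [|k IH]; first by rewrite mul1r.
  by rewrite exprS -mulrA; apply: fixed_on_sup_dist_le fw fv (B_contraction _ _ _ bw bv IH).
move=> x xi Xx Xxi; apply: eq_of_dist_le => d d0.
have [K Kd] := geometric_eventually_le beta_ge0 beta_lt1 c0 d0.
exact: le_trans (wvk K x xi Xx Xxi) (Kd K (leqnn K)).
Qed.

End contraction.
End sup_distance.

Section MPC_operator.
Variables (R : realType) (n m : nat) (X : set 'rV[R]_n) (Xi : set 'rV[R]_m) (beta : R)
  (phi : 'rV[R]_n -> 'rV[R]_n -> 'rV[R]_m -> R) (Y : 'rV[R]_n -> 'rV[R]_m -> set 'rV[R]_n)
  (mu : 'rV[R]_m).
Hypotheses (beta_ge0 : 0 <= beta)
  (phi_bounded : exists M, forall x y xi, X x -> X y -> Xi xi -> `|phi x y xi| <= M)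
  (Y_neq0 : forall x xi, X x -> Xi xi -> Y x xi !=set0)
  (Y_sub : forall x xi, X x -> Xi xi -> Y x xi `<=` X)
  (Xi_mu : Xi mu).

Local Notation B := (BM Y phi beta mu).
Local Notation bounded_on := (bounded_on X Xi).
Local Notation sup_dist_le := (sup_dist_le X Xi).

Lemma BM_objective_bounded {f} : bounded_on f -> exists M, forall x xi y,
  X x -> Xi xi -> Y x xi y -> `|phi x y xi + beta * f y mu| <= M.
Proof.
move=> [Mf fM]; have [Mp phiM] := phi_bounded; exists (Mp + beta * Mf).
move=> x xi y Xx Xxi Yy; have Xy := Y_sub _ _ Xx Xxi _ Yy.
apply: le_trans (ler_normD _ _) (lerD (phiM _ _ _ Xx Xy Xxi) _).
by rewrite normrM ger0_norm // ler_wpM2l // fM.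
Qed.

Lemma BM_objective_lbound {f x xi} : bounded_on f -> X x -> Xi xi ->
  has_lbound [set phi x y xi + beta * f y mu | y in Y x xi].
Proof.
move=> /BM_objective_bounded[M fM] Xx Xxi; exists (- M) => _ [y Yy <-].
by have := fM x xi y Xx Xxi Yy; rewrite ler_norml => /andP[].
Qed.

Lemma BM_bounded f : bounded_on f -> bounded_on (B f).
Proof.
move=> bf; have [M fM] := BM_objective_bounded bf; exists M => x xi Xx Xxi.
have [y Yy] := Y_neq0 _ _ Xx Xxi.
rewrite ler_norml; apply/andP; split.
  apply: lb_le_inf; first by exists (phi x y xi + beta * f y mu), y.
  by move=> _ [z Yz <-]; have := fM x xi z Xx Xxi Yz; rewrite ler_norml => /andP[].
apply: le_trans (ge_inf (BM_objective_lbound bf Xx Xxi) (ex_intro2 _ _ y Yy erefl)) _.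
by have := fM x xi y Xx Xxi Yy; rewrite ler_norml => /andP[].
Qed.

Lemma BM_le_shift {f g c} : bounded_on f -> (forall y, X y -> f y mu <= g y mu + c) ->
  forall x xi, X x -> Xi xi -> B f x xi <= B g x xi + beta * c.
Proof.
move=> bf fg x xi Xx Xxi; rewrite -lerBlDr; apply: lb_le_inf.
  by have [y Yy] := Y_neq0 _ _ Xx Xxi; exists (phi x y xi + beta * g y mu), y.
move=> _ [y Yy <-]; have Xy := Y_sub _ _ Xx Xxi _ Yy.
have := ge_inf (BM_objective_lbound bf Xx Xxi) (ex_intro2 _ _ y Yy erefl).
have := ler_wpM2l beta_ge0 (fg y Xy); lra.
Qed.

Lemma BM_contraction f g c : bounded_on f -> bounded_on g ->
  sup_dist_le f g c -> sup_dist_le (B f) (B g) (beta * c).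
Proof.
move=> bf bg fg x xi Xx Xxi.
have fgc y : X y -> f y mu <= g y mu + c.
  by move=> Xy; have := fg _ _ Xy Xi_mu; rewrite ler_norml => /andP[]; lra.
have gfc y : X y -> g y mu <= f y mu + c.
  by move=> Xy; have := fg _ _ Xy Xi_mu; rewrite ler_norml => /andP[]; lra.
have := BM_le_shift bf fgc _ _ Xx Xxi; have := BM_le_shift bg gfc _ _ Xx Xxi.
by rewrite ler_norml => ? ?; apply/andP; split; lra.
Qed.

Lemma DRO_eq_of_MPC_eq (P : set (probability (borelRV R m) R)) v :
  bounded_on v -> MPC_eq X Xi Y phi beta mu v ->
  (forall y, X y -> ereal_sup
     [set (\int[Q]_(z in (Xi : set (borelRV R m))) (v y z)%:E)%E | Q in P] = (v y mu)%:E) ->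
  DRO_eq X Xi Y phi beta P v.
Proof.
move=> bv v_MPC v_sup x xi Xx Xxi.
rewrite v_MPC // /BM -ereal_inf_EFin; last 2 first.
- exact: BM_objective_lbound.
- by have [y Yy] := Y_neq0 _ _ Xx Xxi; exists (phi x y xi + beta * v y mu), y.
congr ereal_inf; rewrite image_comp; apply: eq_imagel => y Yy /=.
by rewrite v_sup //; exact: Y_sub _ _ Xx Xxi _ Yy.
Qed.

End MPC_operator.

Lemma within_continuous_unif_limit {R : realType} {T : topologicalType} (A : set T)
    (u : nat -> T -> R) (v : T -> R) :
  (forall k, {within A, continuous (u k)}) ->
  (forall e, 0 < e -> exists k, forall t, A t -> `|u k t - v t| <= e) ->
  {within A, continuous v}.
Proof.
move=> uc uv; apply/subspace_continuousP => t At; apply/cvgrPdist_lt => e e0.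
have e3 : 0 < e / 3 by rewrite divr_gt0.
have [k uk] := uv _ e3.
have /subspace_continuousP/(_ t At)/cvgrPdist_lt/(_ _ e3) := uc k.
move=> ukc; apply: filterS2 ukc (withinT A _) => s /= uks As.
have := uk t At; have := uk s As; rewrite /from_subspace /= in uks *.
rewrite !ler_norml ltr_norml => /andP[? ?] /andP[? ?]; move: uks.
by rewrite ltr_norml => /andP[? ?]; apply/andP; split; lra.
Qed.

Lemma continuous_within_slice {T1 T2 S : topologicalType} (A : set T1) (B : set T2)
    (f : T1 -> T2 -> S) a :
  {within A `*` B, continuous (fun p => f p.1 p.2)} -> A a -> {within B, continuous (f a)}.
Proof.
move=> fc Aa; apply/subspace_continuousP => b Bb W /=.
move/(subspace_continuousP _ _).1: fc => /(_ (a, b) (conj Aa Bb) W) fab /fab.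
move=> [[P Q] [/= Pa Qb] PQ]; apply: filterS Qb => z Qz Bz.
exact: (PQ (a, z) (conj (nbhs_singleton Pa) Qz) (conj Aa Bz)).
Qed.

Section borel_rV.
Context {R : realType} {m : nat}.

Lemma rV_closed_measurable (A : set 'rV[R]_m) : closed A -> measurable (A : set (borelRV R m)).
Proof.
move=> cA; rewrite -[A]setCK; apply: measurableC; apply: sub_sigma_algebra.
exact: closed_openC.
Qed.

Lemma rV_continuous_measurable_fun (A : set 'rV[R]_m) (g : 'rV[R]_m -> R) :
  closed A -> {within A, continuous g} ->
  measurable_fun (A : set (borelRV R m)) (g : borelRV R m -> R).
Proof.
move=> cA gc.
apply: (measurability _ (measurable_realfun.RGenOpens.measurableE R)).
move=> _ [_ [a [b ->]] <-].
have := (continuousP _).1 gc _ (@interval_open R (BRight a) (BLeft b) isT isT).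
move/open_subspaceP => [V oV VE]; rewrite setIC -VE.
by apply: measurableI; [exact: sub_sigma_algebra | exact: rV_closed_measurable].
Qed.

End borel_rV.

Section squared_distance.
Context {R : realType} {m : nat}.
Implicit Types (a y z : 'rV[R]_m).

Definition sqdist z a : R := \sum_(j < m) (z ord0 j - a ord0 j) ^+ 2.

Lemma sqdist_ge_coord z a j : (z ord0 j - a ord0 j) ^+ 2 <= sqdist z a.
Proof.
by rewrite /sqdist (bigD1 j) //= lerDl sumr_ge0 // => i _; rewrite sqr_ge0.
Qed.

Lemma sqdist_ge0 z a : 0 <= sqdist z a.
Proof. by apply: sumr_ge0 => j _; rewrite sqr_ge0. Qed.

Lemma sqdist_eq0 z a : sqdist z a = 0 -> z = a.
Proof.
move=> za; apply/rowP => j; apply/eqP; rewrite -subr_eq0 -sqrf_eq0 eq_le sqr_ge0 andbT.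
by rewrite -za sqdist_ge_coord.
Qed.

Lemma sqdistN y a :
  \sum_(j < m) (y ord0 j - a ord0 j) * (a ord0 j - y ord0 j) = - sqdist y a.
Proof. by rewrite /sqdist -sumrN; apply: eq_bigr => j _; ring. Qed.

Lemma continuous_sqdist a : continuous (sqdist ^~ a).
Proof.
have cj j : continuous (fun y : 'rV[R]_m => y ord0 j - a ord0 j).
  by move=> z; apply: (@cvgB _ _ _ (nbhs z)); [exact: coord_continuous | exact: cvg_cst].
apply: (continuous_big (@add_continuous R)) => j _ z.
exact: (@cvgM _ _ (nbhs z) _ _ _ _ _ (cj j z) (cj j z)).
Qed.

Lemma sqdist_segment z y a (l : R) :
  sqdist (l *: z + (1 - l) *: y) a = sqdist y a
    + 2 * l * \sum_(j < m) (y ord0 j - a ord0 j) * (z ord0 j - y ord0 j)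
    + l ^+ 2 * sqdist z y.
Proof.
rewrite /sqdist mulr_sumr mulr_sumr -!big_split /=; apply: eq_bigr => j _.
by rewrite !mxE; ring.
Qed.

Lemma closed_argmin_in_box (A : set 'rV[R]_m) (f : 'rV[R]_m -> R) a (r : R) :
  closed A -> {within A, continuous f} -> A a -> 0 <= r ->
  (forall z, A z -> f z < f a -> forall j, `|z ord0 j - a ord0 j| <= r) ->
  exists2 zs, A zs & forall z, A z -> f zs <= f z.
Proof.
move=> cA fc Aa r0 small_in_box.
pose I j := `[a ord0 j - r, a ord0 j + r]%classic.
pose Box := [set z : 'rV[R]_m | forall j, I j (z ord0 j)].
have inBox z : (forall j, `|z ord0 j - a ord0 j| <= r) -> Box z.
  by move=> zr j; rewrite /I /= in_itv /= -ler_distlC distrC.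
have BoxA_compact : compact (Box `&` A).
  by apply: compact_closedI => //; apply: rV_compact => j; exact: segment_compact.
have BoxA_a : (Box `&` A) a by split => //; apply: inBox => j; rewrite subrr normr0.
have [zs /set_mem[_ Azs] zs_min] := compact_EVT_min (ex_intro _ a BoxA_a) BoxA_compact
  (continuous_subspaceW (@subIsetr _ Box A) fc).
exists zs => // z Az; have [fza|] := ltP (f z) (f a).
  by apply: zs_min; apply/mem_set; split => //; apply: inBox; exact: small_in_box.
by apply: le_trans; apply: zs_min; apply/mem_set.
Qed.

End squared_distance.

Section concave_affine_majorant.
Local Open Scope convex_scope.
Context {R : realType} {m : nat}.

(* [hypo_dist g mu K z] is the squared distance from (mu, K) to (z, min (g z) K),
   the point of the hypograph of g above z that is closest to (mu, K). *)
Definition hypo_gap (g : 'rV[R]_m -> R) (K : R) z := Num.max (K - g z) 0.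
Definition hypo_dist (g : 'rV[R]_m -> R) mu K z := sqdist z mu + hypo_gap g K z ^+ 2.

Variables (Xi : set 'rV[R]_m) (g : 'rV[R]_m -> R).
Hypotheses (Xi_closed : closed Xi)
  (Xi_convex : convex_set (Xi : set (convex_lmodType 'rV[R]_m)))
  (g_concave : concave_on Xi g) (g_cont : {within Xi, continuous g}).

Section hypograph_projection.
Context {mu : 'rV[R]_m} {K : R}.
Hypotheses (Xi_mu : Xi mu) (gmu_lt_K : g mu < K).

Local Notation gap := (hypo_gap g K).

Lemma gap_sqr_le z t : t <= g z -> gap z ^+ 2 <= (K - t) ^+ 2.
Proof.
move=> tgz; rewrite /hypo_gap; have [gzK|Kgz] := leP (K - g z) 0.
  by rewrite expr0n sqr_ge0.
by rewrite !expr2; nra.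
Qed.

Lemma hypo_dist_continuous : {within Xi, continuous (hypo_dist g mu K)}.
Proof.
apply/subspace_continuousP => z Xz; apply: cvgD.
  by apply: cvg_within_filter; exact: continuous_sqdist.
have gz := (subspace_continuousP _ _).1 g_cont z Xz.
have gapz : Num.max (K - g x) 0 @[x --> within Xi (nbhs z)] --> gap z.
  apply: continuous2_cvg; first exact: (@max_continuous _ R (K - g z, 0)).
    by apply: cvgB => //; exact: cvg_cst.
  exact: cvg_cst.
exact: (cvgM gapz gapz).
Qed.

Lemma hypo_dist_argmin :
  exists2 zs, Xi zs & forall z, Xi z -> hypo_dist g mu K zs <= hypo_dist g mu K z.
Proof.
apply: (closed_argmin_in_box _ _ mu (K - g mu)) => //; first exact: hypo_dist_continuous.
  by rewrite subr_ge0 ltW.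
have -> : hypo_dist g mu K mu = (K - g mu) ^+ 2.
  rewrite /hypo_dist /hypo_gap max_l ?subr_ge0 ?ltW // /sqdist big1 ?add0r // => j _.
  by rewrite subrr expr0n.
move=> z _; rewrite /hypo_dist => lt j.
have := sqdist_ge_coord z mu j; have := sqr_ge0 (gap z) => ? ?.
have r0 : 0 <= K - g mu by rewrite subr_ge0 ltW.
apply: ltW; rewrite -(@ltr_pXn2r _ 2) ?nnegrE ?normr_ge0 //= -normrX ger0_norm ?sqr_ge0 //.
lra.
Qed.

Context {zs : 'rV[R]_m}.
Hypotheses (Xi_zs : Xi zs)
  (zs_min : forall z, Xi z -> hypo_dist g mu K zs <= hypo_dist g mu K z).

Let c := gap zs.
Let ts := K - c.

Lemma ts_le_g : ts <= g zs.
Proof. by rewrite /ts /c /hypo_gap lerBlDl -lerBlDr le_max lexx. Qed.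

(* zs minimises the distance along the segment from zs to z, which stays in the
   hypograph by concavity, so the first-order term in l is nonnegative. *)
Lemma projection_ineq z : Xi z ->
  c * (g z - ts) <= \sum_(j < m) (zs ord0 j - mu ord0 j) * (z ord0 j - zs ord0 j).
Proof.
move=> Xz; rewrite -subr_ge0 -(pmulr_rge0 _ (@ltr0n R 2)).
set S := \sum_(j < m) _.
apply: (ge0_of_ge0_perturbation _ (sqdist z zs + (g z - ts) ^+ 2)).
  by rewrite addr_ge0 ?sqdist_ge0 ?sqr_ge0.
move=> l l0 l1.
pose t := Itv01 (ltW l0) l1; pose zl := (z : convex_lmodType _) <| t |> zs.
have Xzl : Xi zl := set_mem (Xi_convex z zs t (mem_set Xz) (mem_set Xi_zs)).
have gzl : l * g z + (1 - l) * ts <= g zl.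
  have := g_concave t z zs (mem_set Xz) (mem_set Xi_zs); rewrite convRE /= -/zl.
  have := ler_wpM2l (_ : 0 <= 1 - l) ts_le_g; rewrite /unstable.onem; lra.
have := zs_min zl Xzl; have := gap_sqr_le _ _ gzl.
rewrite /hypo_dist (_ : zl = l *: z + (1 - l) *: zs) // sqdist_segment -/S -/c /ts.
move=> ? ?; rewrite -(pmulr_rge0 _ l0); nra.
Qed.

Lemma gap_gt0 : 0 < c.
Proof.
rewrite lt_def le_max lexx orbT andbT; apply/eqP => c0.
have := projection_ineq _ Xi_mu; rewrite c0 mul0r sqdistN oppr_ge0 => le0.
have zs_mu : zs = mu by apply: sqdist_eq0; apply/eqP; rewrite eq_le le0 sqdist_ge0.
move: c0; rewrite /c /hypo_gap zs_mu max_l ?subr_ge0 ?ltW //.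
by apply/eqP; rewrite subr_eq0 gt_eqF.
Qed.

End hypograph_projection.

Lemma concave_affine_majorant mu e : Xi mu -> 0 < e ->
  exists (C : R) (w : 'I_m -> R),
    (forall z, Xi z -> g z <= C + \sum_(j < m) w j * z ord0 j) /\
    C + \sum_(j < m) w j * mu ord0 j <= g mu + e.
Proof.
move=> Xi_mu e0; have gK : g mu < g mu + e by rewrite ltrDl.
have [zs Xi_zs zs_min] := hypo_dist_argmin Xi_mu gK.
have c0 := gap_gt0 Xi_mu gK Xi_zs zs_min.
have proj := projection_ineq Xi_zs zs_min.
set c := hypo_gap g _ zs in c0 proj; set ts := g mu + e - c in proj.
pose w j := (zs ord0 j - mu ord0 j) / c.
have affineE (z : 'rV[R]_m) : \sum_(j < m) w j * z ord0 j - \sum_(j < m) w j * zs ord0 j =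
    (\sum_(j < m) (zs ord0 j - mu ord0 j) * (z ord0 j - zs ord0 j)) / c.
  by rewrite mulr_suml -sumrB; apply: eq_bigr => j _; rewrite /w; field; rewrite gt_eqF.
exists (ts - \sum_(j < m) w j * zs ord0 j), w; split => [z Xz|].
  have : g z - ts <= (\sum_(j < m) (zs ord0 j - mu ord0 j) * (z ord0 j - zs ord0 j)) / c.
    by rewrite ler_pdivlMr // mulrC; apply: proj.
  by rewrite -affineE; lra.
have := affineE mu; rewrite sqdistN mulNr.
have := divr_ge0 (sqdist_ge0 zs mu) (ltW c0); rewrite /ts; lra.
Qed.

End concave_affine_majorant.

Section jensen.
Context {R : realType} {m : nat}.
Variables (Xi : set 'rV[R]_m) (mu : 'rV[R]_m) (Q : probability (borelRV R m) R).
Hypotheses (Xi_closed : closed Xi) (Q_Xi : Q (Xi : set (borelRV R m)) = 1%E)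
  (Q_mean : forall j : 'I_m,
     Q.-integrable [set: borelRV R m] (fun z : borelRV R m => (z ord0 j)%:E) /\
     (\int[Q]_z (z ord0 j)%:E = (mu ord0 j)%:E)%E).

Let Xi_measurable : measurable (Xi : set (borelRV R m)) := rV_closed_measurable _ Xi_closed.

Lemma integrable_bounded_continuous (g : 'rV[R]_m -> R) :
  {within Xi, continuous g} -> (exists M, forall z, Xi z -> `|g z| <= M) ->
  Q.-integrable (Xi : set (borelRV R m)) (fun z => (g z)%:E).
Proof.
move=> gc [M gM].
have Q_Xi_finite : (Q (Xi : set (borelRV R m)) < +oo)%E by rewrite Q_Xi ltry.
apply: measurable_bounded_integrable => //.
- exact: rV_continuous_measurable_fun.
- exists M; split; first exact: num_real.
  by move=> M' MM' z Xz; apply: le_trans (gM z Xz) (ltW MM').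
Qed.

Lemma integrable_coord j :
  Q.-integrable (Xi : set (borelRV R m)) (fun z : borelRV R m => (z ord0 j)%:E).
Proof. exact: integrableS measurableT Xi_measurable (@subsetT _ _) (Q_mean j).1. Qed.

Lemma integral_coord j :
  (\int[Q]_(z in (Xi : set (borelRV R m))) (z ord0 j)%:E = (mu ord0 j)%:E)%E.
Proof.
have Q_notXi : Q (~` (Xi : set (borelRV R m))) = 0%E.
  by have := probability_setC Q Xi_measurable; rewrite Q_Xi subee.
rewrite -(Q_mean j).2 (negligible_integral _ _ (Q_mean j).1 Q_notXi) //.
- by rewrite setTD setCK.
- exact: measurableC.
Qed.

Lemma integral_affine (C : R) (w : 'I_m -> R) :
  Q.-integrable (Xi : set (borelRV R m))
    (fun z : borelRV R m => (C + \sum_(j < m) w j * z ord0 j)%:E) /\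
  (\int[Q]_(z in (Xi : set (borelRV R m))) (C + \sum_(j < m) w j * z ord0 j)%:E =
   (C + \sum_(j < m) w j * mu ord0 j)%:E)%E.
Proof.
have -> : (fun z : borelRV R m => (C + \sum_(j < m) w j * z ord0 j)%:E) =
    (fun z => C%:E + \sum_(j < m) ((w j)%:E * (z ord0 j)%:E))%E.
  by apply: funext => z; rewrite EFinD -sumEFin.
have int_wz j : Q.-integrable (Xi : set (borelRV R m))
    (fun z : borelRV R m => (w j)%:E * (z ord0 j)%:E)%E.
  exact: integrableZl (integrable_coord j).
have int_C := finite_measure_integrable_cst Q C Xi_measurable.
have int_sum : Q.-integrable (Xi : set (borelRV R m))
    (fun z : borelRV R m => \sum_(j < m) (w j)%:E * (z ord0 j)%:E)%E.
  by apply: integrable_sum => // j _; exact: int_wz.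
split; first exact: integrableD.
rewrite integralD // integral_cst // integral_sum //.
rewrite (_ : (C%:E * _)%E = C%:E); last by rewrite -[RHS]mule1; congr (_ * _)%E.
rewrite EFinD -sumEFin; congr (_ + _)%E; apply: eq_bigr => j _.
by rewrite integralZl ?integral_coord //; exact: integrable_coord.
Qed.

Theorem jensen_concave (g : 'rV[R]_m -> R) :
  convex_set (Xi : set (convex_lmodType 'rV[R]_m)) -> Xi mu ->
  concave_on Xi g -> {within Xi, continuous g} ->
  (exists M, forall z, Xi z -> `|g z| <= M) ->
  (\int[Q]_(z in (Xi : set (borelRV R m))) (g z)%:E <= (g mu)%:E)%E.
Proof.
move=> Xi_convex Xi_mu g_concave g_cont g_bounded; apply/lee_addgt0Pr => e e0.
have [C [w [g_le C_mu]]] :=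
  concave_affine_majorant _ _ Xi_closed Xi_convex g_concave g_cont _ _ Xi_mu e0.
have [int_affine int_affineE] := integral_affine C w.
apply: (@le_trans _ _ (\int[Q]_(z in (Xi : set (borelRV R m)))
                         (C + \sum_(j < m) w j * z ord0 j)%:E)%E).
  apply: le_integral => //; first exact: integrable_bounded_continuous.
  by move=> z /set_mem Xz; rewrite lee_fin; apply: g_le.
by rewrite int_affineE lee_fin.
Qed.

End jensen.

Lemma Cb_cvg_unif {R : realType} {n m : nat} (X : set 'rV[R]_n) (Xi : set 'rV[R]_m)
    (u : nat -> 'rV[R]_n -> 'rV[R]_m -> R) v :
  (forall k, Cb X Xi (u k)) -> cvg_unif X Xi u v -> Cb X Xi v.
Proof.
move=> u_Cb uv; have [K uKv] := uv 1 ltr01.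
split; first exact: bounded_on_sup_dist _ _ (u_Cb K).1 (sup_dist_leC _ _ (uKv K _)).
apply: (within_continuous_unif_limit _ (fun k p => u k p.1 p.2)) => [k|e e0].
  exact: (u_Cb k).2.
by have [k uk] := uv e e0; exists k => -[x xi] [Xx Xxi]; apply: uk.
Qed.

Lemma ereal_sup_integral_concave {R : realType} {m : nat} (Xi : set 'rV[R]_m)
    (mu : 'rV[R]_m) (P : set (probability (borelRV R m) R)) (g : 'rV[R]_m -> R) :
  closed Xi -> convex_set (Xi : set (convex_lmodType 'rV[R]_m)) -> Xi mu ->
  concave_on Xi g -> {within Xi, continuous g} -> (exists M, forall z, Xi z -> `|g z| <= M) ->
  (forall Q, P Q ->
     Q (Xi : set (borelRV R m)) = 1%E /\
     forall j : 'I_m,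
       Q.-integrable [set: borelRV R m] (fun z : borelRV R m => (z ord0 j)%:E) /\
       (\int[Q]_z (z ord0 j)%:E = (mu ord0 j)%:E)%E) ->
  P (\d_(mu : borelRV R m)) ->
  ereal_sup [set (\int[Q]_(z in (Xi : set (borelRV R m))) (g z)%:E)%E | Q in P] =
  (g mu)%:E.
Proof.
move=> Xi_closed Xi_convex Xi_mu g_concave g_cont g_bounded P_mean P_dirac.
apply/eqP; rewrite eq_le; apply/andP; split.
  apply: ge_ereal_sup => _ [Q PQ <-]; have [Q_Xi Q_mean] := P_mean Q PQ.
  exact: (jensen_concave _ _ _ Xi_closed Q_Xi Q_mean).
apply: ereal_sup_ubound; exists (\d_(mu : borelRV R m)) => //.
have := @integral_dirac _ (borelRV R m) (mu : borelRV R m) R _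
  (rV_closed_measurable _ Xi_closed) (fun z : borelRV R m => (g z)%:E).
rewrite diracE mem_set // mul1e; apply.
apply: (measurable_realfun.measurable_EFinP _ (g : borelRV R m -> R)).2.
exact: rV_continuous_measurable_fun.
Qed.

Theorem theorem1 (R : realType) (n m N : nat)
    (X : set 'rV[R]_n) (Xi : set 'rV[R]_m) (beta : R)
    (phi : 'rV[R]_n -> 'rV[R]_n -> 'rV[R]_m -> R)
    (Y : 'rV[R]_n -> 'rV[R]_m -> set 'rV[R]_n)
    (xis : 'I_N -> 'rV[R]_m)
    (P : set (probability (borelRV R m) R)) :
  closed X -> convex_set (X : set (convex_lmodType 'rV[R]_n)) ->
  closed Xi -> convex_set (Xi : set (convex_lmodType 'rV[R]_m)) ->
  0 < beta < 1 ->
  (exists M : R, forall x y xi, X x -> X y -> Xi xi -> `|phi x y xi| <= M) ->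
  {within (X `*` X) `*` Xi,
     continuous (fun p : ('rV[R]_n * 'rV[R]_n) * 'rV[R]_m => phi p.1.1 p.1.2 p.2)} ->
  (forall x xi, X x -> Xi xi ->
     [/\ Y x xi !=set0, compact (Y x xi) & Y x xi `<=` X]) ->
  continuous_corr (X `*` Xi) (fun p : 'rV[R]_n * 'rV[R]_m => Y p.1 p.2) ->
  (0 < N)%N ->
  (forall i, Xi (xis i)) ->
  (forall Q, P Q ->
     Q (Xi : set (borelRV R m)) = 1%E /\
     forall j : 'I_m,
       Q.-integrable [set: borelRV R m] (fun z : borelRV R m => (z ord0 j)%:E) /\
       (\int[Q]_z (z ord0 j)%:E = (emp_mean xis ord0 j)%:E)%E) ->
  P (\d_(emp_mean xis : borelRV R m)) ->
  concavity_preserving X Xi (BM Y phi beta (emp_mean xis)) ->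
  exists v : 'rV[R]_n -> 'rV[R]_m -> R,
    [/\ Cb X Xi v,
        MPC_eq X Xi Y phi beta (emp_mean xis) v,
        DRO_eq X Xi Y phi beta P v &
        (forall w, Cb X Xi w -> MPC_eq X Xi Y phi beta (emp_mean xis) w ->
           forall x xi, X x -> Xi xi -> w x xi = v x xi)].
Proof.
move=> _ _ Xi_closed Xi_convex /andP[beta_gt0 beta_lt1] phi_bounded _ Y_prop _ _ _
  P_mean P_dirac [F [[f0 Ff0] F_Cb F_closed F_concave F_BM]].
set mu := emp_mean xis; set B := BM Y phi beta mu; have beta_ge0 := ltW beta_gt0.
have Y_neq0 x xi : X x -> Xi xi -> Y x xi !=set0 by move=> /Y_prop/[apply] -[].
have Y_sub x xi : X x -> Xi xi -> Y x xi `<=` X by move=> /Y_prop/[apply] -[].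
have Xi_mu : Xi mu.
  have : (\d_(mu : borelRV R m) (Xi : set (borelRV R m)) = 1)%E := (P_mean _ P_dirac).1.
  rewrite diracE; case: (boolP (mu \in Xi)) => [/set_mem //|_].
  by move=> /eqP; rewrite eqe eq_sym oner_eq0.
have B_bounded f : bounded_on X Xi f -> bounded_on X Xi (B f) by exact: BM_bounded.
have B_contraction f g c : bounded_on X Xi f -> bounded_on X Xi g ->
    sup_dist_le X Xi f g c -> sup_dist_le X Xi (B f) (B g) (beta * c).
  exact: BM_contraction.
have [v [bv v_lim v_MPC]] :=
  contraction_fixed_point _ _ _ _ beta_ge0 beta_lt1 B_bounded B_contraction _ (F_Cb _ Ff0).1.
have iter_F k : F (iter k B f0) by elim: k => //= k; exact: F_BM.
have Cb_v : Cb X Xi v := Cb_cvg_unif _ _ _ _ (fun k => F_Cb _ (iter_F k)) v_lim.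
have Fv : F v := F_closed _ v iter_F Cb_v v_lim.
exists v; split => //.
  apply: (@DRO_eq_of_MPC_eq _ _ _ X Xi beta phi Y mu) => // y Xy.
  apply: ereal_sup_integral_concave => //; first exact: F_concave.
    exact: continuous_within_slice Cb_v.2 Xy.
  by have [M vM] := bv; exists M => z; exact: vM.
move=> w [bw _] w_MPC.
exact: fixed_on_unique _ _ _ _ beta_ge0 beta_lt1 B_contraction _ _ bv bw v_MPC w_MPC.
Qed.
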